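(* Given any non-empty closed subset $S$ of the extended real numbers $\overline{\mathbb{R}}$, there is a real valued function $f$ defined on the closed interval $[0,1]$ such that the set of right hand sequential secant derivatives of $f$ at $0$ equals $S$.
   Context: $\overline{\mathbb{R}}=\mathbb{R}\cup\{\pm\infty\}$. A set $S\subseteq\overline{\mathbb{R}}$ is called closed if every $L\in\overline{\mathbb{R}}$ for which there is a sequence of real numbers $L_n\in S\cap\mathbb{R}$ with $L_n\to L$ belongs to $S$. For $f:[0,1]\to\mathbb{R}$, $L\in\overline{\mathbb{R}}$ is a right hand sequential secant derivative of $f$ at $0$ if there is a sequence $h_n>0$ with $h_n\to0$ and $\frac{f(h_n)-f(0)}{h_n}\to L$ as $n\to\infty$. *)

From Stdlib Require Import Reals.
From Coquelicot Require Import Coquelicot.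
Open Scope R_scope.

Definition closed_Rbar_set (S : Rbar -> Prop) : Prop :=
  forall L : Rbar,
    (exists u : nat -> R, (forall n, S (Finite (u n))) /\ is_lim_seq u L) ->
    S L.

(* L is a right hand sequential secant derivative of f at 0: there is a
   sequence h_n > 0 with h_n -> 0 and (f(h_n) - f(0))/h_n -> L.
   f is meant as a function on [0,1]; we require h_n in (0,1] so only the
   values of f on [0,1] are used. *)
Definition rh_secant_derivative (f : R -> R) (L : Rbar) : Prop :=
  exists h : nat -> R,
    (forall n, 0 < h n <= 1) /\
    is_lim_seq h 0 /\
    is_lim_seq (fun n => (f (h n) - f 0) / h n) L.

(* The secant quotients at 0 of [f x := x * g x] are the values of [g], so it
   suffices to find [g] whose sequential limits at 0+ are exactly the points
   of [S].  A sawtooth [sweep] of growing amplitude takes every real value on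
   every interval (0, eps); let [g x] be a point of [S] within [x] of
   [sweep x] if there is one, and otherwise [1/x] or [-1/x] when the
   corresponding infinity is in [S].  Along a sequence on which [sweep] is
   constant (resp. tends to an infinity) [g] tends to the given point of [S].
   Conversely a limit of [g] is, eventually, a limit of points of [S] unless
   it is an infinity lying in [S], hence it is in [S] by closedness. *)
From Stdlib Require Import Reals Lra Lia Classical ClassicalEpsilon.
From Coquelicot Require Import Coquelicot.
Open Scope R_scope.

Lemma is_lim_seq_Rinv_0_right (h : nat -> R) :
  (forall n, 0 < h n) -> is_lim_seq h 0 -> is_lim_seq (fun n => / h n) p_infty.
Proof.
  intros Hpos Hlim.
  apply (filterlim_comp _ _ _ h Rinv eventually (at_right 0));
    [|exact filterlim_Rinv_0_right].
  intros P HP.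
  exact (filter_imp _ _ (fun n HPn => HPn (Hpos n)) (Hlim _ HP)).
Qed.

Lemma closed_Rbar_set_eventually (S : Rbar -> Prop) (u : nat -> R) (L : Rbar) :
  closed_Rbar_set S -> is_lim_seq u L ->
  eventually (fun n => S (Finite (u n))) -> S L.
Proof.
  intros HS Hu [N HN]. apply HS. exists (fun n => u (n + N)%nat). split.
  - intro n. apply HN. lia.
  - exact (proj1 (is_lim_seq_incr_n u N L) Hu).
Qed.

Definition right_cluster_value (g : R -> R) (L : Rbar) : Prop :=
  exists h : nat -> R,
    (forall n, 0 < h n <= 1) /\ is_lim_seq h 0 /\
    is_lim_seq (fun n => g (h n)) L.

Lemma rh_secant_derivative_mul_id (g : R -> R) (L : Rbar) :
  rh_secant_derivative (fun x => x * g x) L <-> right_cluster_value g L.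
Proof.
  assert (Hquot : forall x, 0 < x -> (x * g x - 0 * g 0) / x = g x).
  { intros x Hx. field. lra. }
  split; intros [h [Hh [Hh0 Hlim]]]; exists h; refine (conj Hh (conj Hh0 _));
    refine (is_lim_seq_ext _ _ _ _ Hlim); intro n;
    rewrite (Hquot _ (proj1 (Hh n))); reflexivity.
Qed.

(* With [N := up (1/x)], [sweep x] runs linearly over (-N, N] while [1/x]
   runs over [N - 1, N). *)
Definition sweep (x : R) : R :=
  let N := IZR (up (/ x)) in N * (2 * (N - / x) - 1).

Lemma sweep_hits (t eps : R) : 0 < eps -> exists x, 0 < x < eps /\ sweep x = t.
Proof.
  intros Heps.
  pose (n := up (Rabs t + / eps + 1)). pose (N := IZR n).
  assert (HN : Rabs t + / eps + 1 < N) by apply archimed.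
  assert (Hinv_eps : 0 < / eps) by (apply Rinv_0_lt_compat; lra).
  pose proof (Rabs_pos t).
  destruct (Rabs_def2 t N) as [Ht1 Ht2]; [lra|].
  pose (q := t / N).
  assert (Htq : t = N * q) by (unfold q; field; lra).
  clearbody q.
  assert (Hq : -1 < q < 1) by (split; apply (Rmult_lt_reg_l N); lra).
  pose (z := N - (q + 1) / 2).
  assert (Hz_up : up z = n) by (symmetry; apply tech_up; fold N; unfold z; lra).
  exists (/ z). rewrite <- (Rinv_inv eps). split; [split|].
  - apply Rinv_0_lt_compat. unfold z. lra.
  - apply Rinv_lt_contravar; [apply Rmult_lt_0_compat|]; unfold z; lra.
  - unfold sweep. rewrite Rinv_inv, Hz_up. fold N. unfold z. rewrite Htq. field.
Qed.

Lemma sweep_hits_seq (t : nat -> R) :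
  exists h : nat -> R,
    (forall n, 0 < h n <= 1) /\ is_lim_seq h 0 /\
    (forall n, INR n + 1 < / h n) /\ (forall n, sweep (h n) = t n).
Proof.
  assert (Hsucc : forall n, 0 < INR n + 1) by (intro n; pose proof (pos_INR n); lra).
  destruct (choice (fun n x => 0 < x < / (INR n + 1) /\ sweep x = t n)) as [h Hh].
  { intro n. apply sweep_hits, Rinv_0_lt_compat, Hsucc. }
  assert (Hbound : forall n, 0 < h n < / (INR n + 1)) by (intro n; apply Hh).
  exists h. repeat split.
  - apply Hbound.
  - apply (Rle_trans _ (/ (INR n + 1))); [left; apply Hbound|].
    rewrite <- Rinv_1. apply Rinv_le_contravar; [lra|]. pose proof (pos_INR n). lra.
  - apply (is_lim_seq_le_le (fun _ => 0) _ (fun n => / INR (S n))).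
    + intro n. rewrite S_INR. split; left; apply Hbound.
    + apply is_lim_seq_const.
    + change (Finite 0) with (Rbar_inv p_infty).
      apply is_lim_seq_inv; [|discriminate].
      apply (is_lim_seq_incr_1 INR), is_lim_seq_INR.
  - intro n. rewrite <- (Rinv_inv (INR n + 1)).
    apply Rinv_lt_contravar; [apply Rmult_lt_0_compat|apply Hbound].
    + apply Hbound.
    + apply Rinv_0_lt_compat, Hsucc.
  - apply Hh.
Qed.

Section Slope.

Variable S : Rbar -> Prop.
Hypothesis S_nonempty : exists L, S L.
Hypothesis S_closed : closed_Rbar_set S.

Definition near_sweep (x a : R) : Prop := S (Finite a) /\ Rabs (a - sweep x) < x.

(* When both infinities are in [S] the fallback follows the sign of [sweep x],
   so that [slope_p_infty] and [slope_m_infty] hold together. *)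
Definition slope (x : R) : R :=
  if excluded_middle_informative (exists a, near_sweep x a)
  then epsilon (inhabits 0) (near_sweep x)
  else if excluded_middle_informative (S p_infty /\ (0 <= sweep x \/ ~ S m_infty))
  then / x
  else if excluded_middle_informative (S m_infty) then - / x
  else epsilon (inhabits 0) (fun a => S (Finite a)).

Lemma slope_cases (x : R) :
  S (Finite (slope x)) \/ (slope x = / x /\ S p_infty) \/ (slope x = - / x /\ S m_infty).
Proof.
  unfold slope.
  destruct excluded_middle_informative as [Hnear|_].
  { left. exact (proj1 (epsilon_spec _ _ Hnear)). }
  destruct excluded_middle_informative as [Hp|Hp].
  { right; left. split; [reflexivity|apply Hp]. }
  destruct excluded_middle_informative as [Hm|Hm].
  { right; right. split; [reflexivity|exact Hm]. }
  left. apply (epsilon_spec _ (fun a => S (Finite a))).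
  destruct S_nonempty as [[r| |] HL]; [exists r; exact HL|tauto|tauto].
Qed.

Lemma slope_near (x : R) :
  0 < x -> S (Finite (sweep x)) -> Rabs (slope x - sweep x) < x.
Proof.
  intros Hx HS. unfold slope.
  destruct excluded_middle_informative as [Hnear|Hnear].
  - exact (proj2 (epsilon_spec _ _ Hnear)).
  - exfalso. apply Hnear. exists (sweep x). split; [exact HS|].
    rewrite Rminus_eq_0, Rabs_R0. exact Hx.
Qed.

Lemma slope_p_infty (x : R) :
  S p_infty -> 0 <= sweep x -> slope x = / x \/ Rabs (slope x - sweep x) < x.
Proof.
  intros Hp Hsweep. unfold slope.
  destruct excluded_middle_informative as [Hnear|_].
  { right. exact (proj2 (epsilon_spec _ _ Hnear)). }
  destruct excluded_middle_informative; tauto.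
Qed.

Lemma slope_m_infty (x : R) :
  S m_infty -> sweep x < 0 -> slope x = - / x \/ Rabs (slope x - sweep x) < x.
Proof.
  intros Hm Hsweep. unfold slope.
  destruct excluded_middle_informative as [Hnear|_].
  { right. exact (proj2 (epsilon_spec _ _ Hnear)). }
  destruct excluded_middle_informative as [[_ [Hpos|Hnm]]|_]; [lra|tauto|].
  destruct excluded_middle_informative; tauto.
Qed.

Lemma right_cluster_value_slope_in_S (L : Rbar) :
  right_cluster_value slope L -> S L.
Proof.
  intros [h [Hh [Hh0 Hlim]]].
  assert (Hinv := proj2 (is_lim_seq_spec _ _)
    (is_lim_seq_Rinv_0_right h (fun n => proj1 (Hh n)) Hh0)).
  assert (Hinv_pos : forall n, 0 < / h n) by (intro n; apply Rinv_0_lt_compat, Hh).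
  apply is_lim_seq_spec in Hlim as Hlim'.
  destruct L as [r| |].
  - apply (closed_Rbar_set_eventually _ _ _ S_closed Hlim).
    generalize (filter_and _ _ (Hlim' (mkposreal 1 Rlt_0_1)) (Hinv (Rabs r + 1))).
    apply filter_imp. intros n [Hclose Hlarge]. simpl in Hclose.
    destruct (slope_cases (h n)) as [Hfin|[[Hval _]|[Hval _]]]; [exact Hfin| |];
      rewrite Hval in Hclose; exfalso; revert Hclose Hlarge; split_Rabs; lra.
  - destruct (classic (S p_infty)) as [Hp|Hp]; [exact Hp|].
    apply (closed_Rbar_set_eventually _ _ _ S_closed Hlim).
    generalize (Hlim' 0). apply filter_imp. intros n Hpos.
    specialize (Hinv_pos n).
    destruct (slope_cases (h n)) as [Hfin|[[_ Hp']|[Hval _]]]; [exact Hfin|tauto|lra].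
  - destruct (classic (S m_infty)) as [Hm|Hm]; [exact Hm|].
    apply (closed_Rbar_set_eventually _ _ _ S_closed Hlim).
    generalize (Hlim' 0). apply filter_imp. intros n Hneg.
    specialize (Hinv_pos n).
    destruct (slope_cases (h n)) as [Hfin|[[Hval _]|[_ Hm']]]; [exact Hfin|lra|tauto].
Qed.

Lemma right_cluster_value_slope_finite (r : R) :
  S (Finite r) -> right_cluster_value slope r.
Proof.
  intros Hr.
  destruct (sweep_hits_seq (fun _ => r)) as [h [Hh [Hh0 [_ Hsweep]]]].
  exists h. repeat split; [apply Hh|apply Hh|exact Hh0|].
  assert (Hclose : forall n, Rabs (slope (h n) - r) < h n).
  { intro n. rewrite <- (Hsweep n). apply slope_near; [apply Hh|].
    rewrite Hsweep. exact Hr. }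
  apply (is_lim_seq_le_le (fun n => r - h n) _ (fun n => r + h n)).
  - intro n. specialize (Hclose n). revert Hclose. split_Rabs; lra.
  - rewrite <- (Rminus_0_r r) at 1.
    apply (is_lim_seq_minus' _ _ r 0); [apply is_lim_seq_const|exact Hh0].
  - rewrite <- (Rplus_0_r r) at 1.
    apply (is_lim_seq_plus' _ _ r 0); [apply is_lim_seq_const|exact Hh0].
Qed.

Lemma right_cluster_value_slope_p_infty :
  S p_infty -> right_cluster_value slope p_infty.
Proof.
  intros Hp.
  destruct (sweep_hits_seq (fun n => INR n + 1)) as [h [Hh [Hh0 [Hlarge Hsweep]]]].
  exists h. repeat split; [apply Hh|apply Hh|exact Hh0|].
  apply (is_lim_seq_le_p_loc INR); [|exact is_lim_seq_INR].
  exists 0%nat. intros n _. specialize (Hlarge n). destruct (Hh n).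
  destruct (slope_p_infty (h n) Hp) as [Hval|Hclose].
  - rewrite Hsweep. pose proof (pos_INR n). lra.
  - rewrite Hval. lra.
  - rewrite Hsweep in Hclose. revert Hclose. split_Rabs; lra.
Qed.

Lemma right_cluster_value_slope_m_infty :
  S m_infty -> right_cluster_value slope m_infty.
Proof.
  intros Hm.
  destruct (sweep_hits_seq (fun n => - (INR n + 1))) as [h [Hh [Hh0 [Hlarge Hsweep]]]].
  exists h. repeat split; [apply Hh|apply Hh|exact Hh0|].
  apply (is_lim_seq_le_m_loc (fun n => - INR n));
    [|exact (proj1 (is_lim_seq_opp INR p_infty) is_lim_seq_INR)].
  exists 0%nat. intros n _. specialize (Hlarge n). destruct (Hh n).
  destruct (slope_m_infty (h n) Hm) as [Hval|Hclose].
  - rewrite Hsweep. pose proof (pos_INR n). lra.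
  - rewrite Hval. lra.
  - rewrite Hsweep in Hclose. revert Hclose. split_Rabs; lra.
Qed.

Lemma right_cluster_value_slope_of_S (L : Rbar) :
  S L -> right_cluster_value slope L.
Proof.
  destruct L as [r| |].
  - apply right_cluster_value_slope_finite.
  - apply right_cluster_value_slope_p_infty.
  - apply right_cluster_value_slope_m_infty.
Qed.

End Slope.

Theorem theorem2p5 (S : Rbar -> Prop) :
  (exists L : Rbar, S L) -> closed_Rbar_set S ->
  exists f : R -> R, forall L : Rbar, rh_secant_derivative f L <-> S L.
Proof.
  intros Hne HS. exists (fun x => x * slope S x). intro L.
  rewrite rh_secant_derivative_mul_id. split.
  - exact (right_cluster_value_slope_in_S S Hne HS L).
  - exact (right_cluster_value_slope_of_S S L).
Qed.
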